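(* Let $\mathbf V$ be a monoid variety and let $\mathcal F$ be a logic corresponding to $\mathbf V$. Let $f$ be a partial function $\Sigma^\ast\to\Sigma^\ast$ definable by a complete $\mathbf V$-bimachine. Then $f$ is definable by an $\mathcal F$-translation.
   Context: Bimachines: a bimachine is a tuple $B=(L,R,\omega,\lambda,\rho)$ where $L$ is a deterministic left automaton over $\Sigma$ with initial state $l_0$, $R$ is a deterministic right automaton (reading right to left) with initial state $r_0$, $\omega:L\times\Sigma\times R\to\Sigma^\ast$ is a partial output function and $\rho:L\to\Sigma^\ast$, $\lambda:R\to\Sigma^\ast$ are partial. For $u=\sigma_1\cdots\sigma_n$ with runs $l_0\xrightarrow{\sigma_1}l_1\cdots\xrightarrow{\sigma_n}l_n$ of $L$ and $r_n\xleftarrow{\sigma_1}r_{n-1}\cdots r_1\xleftarrow{\sigma_n}r_0$ of $R$, $[\![B]\!](u)=\lambda(r_n)\,\omega(l_0,\sigma_1,r_{n-1})\cdots\omega(l_{i-1},\sigma_i,r_{n-i})\cdots\omega(l_{n-1},\sigma_n,r_0)\,\rho(l_n)$ when all these are defined. $B$ is complete if $\omega$ is total. The transition congruence of an automaton $A$ with state set $Q$ is $u\equiv_A v$ iff for all $p,q\in Q$, ($A$ has a run from $p$ to $q$ on $u$) $\Leftrightarrow$ (it has one on $v$); the transition monoid is $\Sigma^\ast/\equiv_A$; $A$ is a $\mathbf V$-automaton if its transition monoid is in $\mathbf V$. $B$ is a $\mathbf V$-bimachine if $L$ and $R$ are $\mathbf V$-automata. A language is a $\mathbf V$-language if it is recognized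 by some $\mathbf V$-automaton. Logics: $\mathcal F$ is a fragment of monadic second-order logic over words (signature $<$ and unary letter predicates); a language is an $\mathcal F$-language if it is the set of words satisfying some closed $\mathcal F$-formula; $\mathcal F$ corresponds to $\mathbf V$ if the $\mathcal F$-languages are exactly the $\mathbf V$-languages. Translations: an $\mathcal F$-translation is a tuple $\mathcal T=(k,S,(\varphi^<_{j,\sigma,v},\varphi^>_{j,\sigma,v})_{1\le j\le k,\sigma\in\Sigma,v\in S},(\varphi^i_v)_{v\in S},(\varphi^t_v)_{v\in S})$ with $k>0$, $S\subset\Sigma^\ast$ finite, and all $\varphi$ closed $\mathcal F$-formulas. $(u,w)\in[\![\mathcal T]\!]$ iff for $u=\sigma_1\cdots\sigma_n$ there is a decomposition $w=w_0w_1\cdots w_nw_{n+1}$ with all $w_i\in S$ such that for each $1\le i\le n$ there is $j\le k$ with $\sigma_1\cdots\sigma_{i-1}\models\varphi^<_{j,\sigma_i,w_i}$ and $\sigma_{i+1}\cdots\sigma_n\models\varphi^>_{j,\sigma_i,w_i}$, and $u\models\varphi^i_{w_0}$, $u\models\varphi^t_{w_{n+1}}$. It is required to be exhaustive: for all $\sigma\in\Sigma$, $u,w\in\Sigma^\ast$ there are $j\le k$, $v\in S$ with $u\models\varphi^<_{j,\sigma,v}$ and $w\models\varphi^>_{j,\sigma,v}$; and functional: for $v_1\ne v_2$ in $S$ and any $j,j',\sigma$, either $\varphi^<_{j,\sigma,v_1}\wedge\varphi^<_{j',\sigma,v_2}$ or $\varphi^>_{j,\sigma,v_1}\wedge\varphi^>_{j',\sigma,v_2}$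 is unsatisfiable, and $\varphi^i_{v_1}\wedge\varphi^i_{v_2}$, $\varphi^t_{v_1}\wedge\varphi^t_{v_2}$ are unsatisfiable. A function is definable by $\mathcal T$ if it equals $[\![\mathcal T]\!]$. *)

From mathcomp Require Import all_boot.
Set Implicit Arguments.
Unset Strict Implicit.
Unset Printing Implicit Defensive.

Record finMonoid := FinMonoid {
  fm_sort :> finType;
  fm_op : fm_sort -> fm_sort -> fm_sort;
  fm_one : fm_sort;
  fm_assoc : associative fm_op;
  fm_left_id : left_id fm_one fm_op;
  fm_right_id : right_id fm_one fm_op }.

Definition fm_morph (M N : finMonoid) (phi : M -> N) : Prop :=
  phi (fm_one M) = fm_one N /\
  forall x y, phi (fm_op x y) = fm_op (phi x) (phi y).

Definition fm_divides (N M : finMonoid) : Prop :=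
  exists (S : {set M}) (phi : M -> N),
    [/\ fm_one M \in S,
        {in S &, forall x y, fm_op x y \in S},
        phi (fm_one M) = fm_one N,
        {in S &, forall x y, phi (fm_op x y) = fm_op (phi x) (phi y)} &
        forall n : N, exists2 m, m \in S & phi m = n].

(* A monoid variety (pseudovariety) of finite monoids: a class of finite
   monoids closed under submonoids, homomorphic images and finite direct
   products (the empty product being the trivial monoid).  A monoid P is
   (isomorphic to) the direct product M1 x M2 when there are morphisms
   p1, p2 such that x |-> (p1 x, p2 x) is a bijection P -> M1 * M2. *)
Definition monoid_variety (V : finMonoid -> Prop) : Prop :=
  [/\ (forall M N : finMonoid, V M -> fm_divides N M -> V N),
      (forall M1 M2 P : finMonoid, V M1 -> V M2 ->
         (exists (p1 : P -> M1) (p2 : P -> M2),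
            [/\ fm_morph p1, fm_morph p2 &
                bijective (fun x => (p1 x, p2 x))]) -> V P) &
      (forall M : finMonoid, #|M| = 1 -> V M)].

(* The quotient monoid Sigma^* / c lies in V, where c is a congruence:
   some monoid of V is the image of a surjective morphism of Sigma^*
   whose kernel is exactly c. *)
Definition quotient_in_V (V : finMonoid -> Prop) (Sigma : Type)
    (c : seq Sigma -> seq Sigma -> Prop) : Prop :=
  exists (M : finMonoid) (h : seq Sigma -> M),
    [/\ V M,
        h [::] = fm_one M,
        (forall u v, h (u ++ v) = fm_op (h u) (h v)),
        (forall m : M, exists u, h u = m) &
        (forall u v, h u = h v <-> c u v)].

Record DA (Sigma : Type) := MkDA {
  da_state :> finType;
  da_init : da_state;
  da_delta : da_state -> Sigma -> option da_state }.
Arguments da_delta {Sigma} d _ _.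

Fixpoint trans (Sigma : Type) (A : DA Sigma) (p : da_state A) (u : seq Sigma)
  : option (da_state A) :=
  match u with
  | [::] => Some p
  | a :: u' => match da_delta A p a with
               | Some q => @trans Sigma A q u'
               | None => None
               end
  end.
Arguments trans {Sigma} A p u.

Definition tcongL (Sigma : Type) (A : DA Sigma) (u v : seq Sigma) : Prop :=
  forall p q : da_state A, trans A p u = Some q <-> trans A p v = Some q.

(* transition congruence of a right automaton (reading right to left):
   a run of a right automaton on u is a run of the underlying transition
   function on rev u *)
Definition tcongR (Sigma : Type) (A : DA Sigma) (u v : seq Sigma) : Prop :=
  forall p q : da_state A, trans A p (rev u) = Some q <-> trans A p (rev v) = Some q.

Definition V_automatonL (V : finMonoid -> Prop) (Sigma : Type) (A : DA Sigma)
  : Prop := quotient_in_V V (tcongL A).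

Definition V_automatonR (V : finMonoid -> Prop) (Sigma : Type) (A : DA Sigma)
  : Prop := quotient_in_V V (tcongR A).

Definition V_language (V : finMonoid -> Prop) (Sigma : Type)
    (L : seq Sigma -> Prop) : Prop :=
  exists (A : DA Sigma) (Fin : pred (da_state A)),
    V_automatonL V A /\
    forall u, L u <-> exists q, trans A (da_init A) u = Some q /\ Fin q.

Record bimachine (Sigma : Type) := MkBimachine {
  bmL : DA Sigma;
  bmR : DA Sigma;
  bm_omega : da_state bmL -> Sigma -> da_state bmR -> option (seq Sigma);
  bm_lambda : da_state bmR -> option (seq Sigma);
  bm_rho : da_state bmL -> option (seq Sigma) }.
Arguments bm_omega {Sigma} b _ _ _.
Arguments bm_lambda {Sigma} b _.
Arguments bm_rho {Sigma} b _.

Definition complete_bm (Sigma : Type) (B : bimachine Sigma) : Prop :=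
  forall l a r, bm_omega B l a r <> None.

Definition V_bimachine (V : finMonoid -> Prop) (Sigma : Type)
    (B : bimachine Sigma) : Prop :=
  V_automatonL V (bmL B) /\ V_automatonR V (bmR B).

Fixpoint splits (Sigma : Type) (p s : seq Sigma)
  : seq (seq Sigma * Sigma * seq Sigma) :=
  match s with
  | [::] => [::]
  | a :: s' => (p, a, s') :: splits (rcons p a) s'
  end.

Fixpoint ocat (Sigma : Type) (l : seq (option (seq Sigma)))
  : option (seq Sigma) :=
  match l with
  | [::] => Some [::]
  | o :: l' => match o, ocat l' with
               | Some w, Some w' => Some (w ++ w')
               | _, _ => None
               end
  end.

(* output at position (p, a, s): omega(l, a, r) with l the state of L
   after p and r the state of R after reading s from right to left *)
Definition bm_letter (Sigma : Type) (B : bimachine Sigma)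
    (x : seq Sigma * Sigma * seq Sigma) : option (seq Sigma) :=
  let: (p, a, s) := x in
  match trans (bmL B) (da_init (bmL B)) p,
        trans (bmR B) (da_init (bmR B)) (rev s) with
  | Some l, Some r => bm_omega B l a r
  | _, _ => None
  end.

Definition bm_sem (Sigma : Type) (B : bimachine Sigma) (u : seq Sigma)
  : option (seq Sigma) :=
  match trans (bmR B) (da_init (bmR B)) (rev u),
        trans (bmL B) (da_init (bmL B)) u with
  | Some rn, Some ln =>
      match bm_lambda B rn, ocat (map (bm_letter B) (splits [::] u)),
            bm_rho B ln with
      | Some x, Some y, Some z => Some (x ++ y ++ z)
      | _, _, _ => None
      end
  | _, _ => None
  end.

Inductive mso (Sigma : Type) :=
| MTrue
| MFalse
| MLt of nat & nat
| MEq of nat & nat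
| MLetter of Sigma & nat
| MMem of nat & nat
| MNot of mso Sigma
| MAnd of mso Sigma & mso Sigma
| MOr of mso Sigma & mso Sigma
| MImp of mso Sigma & mso Sigma
| MExFO of nat & mso Sigma
| MAllFO of nat & mso Sigma
| MExSO of nat & mso Sigma
| MAllSO of nat & mso Sigma.

Arguments MTrue {Sigma}.
Arguments MFalse {Sigma}.
Arguments MLt {Sigma}.
Arguments MEq {Sigma}.
Arguments MMem {Sigma}.

Definition upd (T : Type) (f : nat -> T) (x : nat) (t : T) : nat -> T :=
  fun y => if y == x then t else f y.

(* positions of u are 0 .. size u - 1 *)
Fixpoint sat (Sigma : Type) (u : seq Sigma) (fo : nat -> nat)
    (so : nat -> nat -> bool) (phi : mso Sigma) : Prop :=
  match phi with
  | MTrue => True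
  | MFalse => False
  | MLt x y => fo x < fo y
  | MEq x y => fo x = fo y
  | MLetter a x => onth u (fo x) = Some a
  | MMem x X => so X (fo x)
  | MNot p => ~ sat u fo so p
  | MAnd p q => sat u fo so p /\ sat u fo so q
  | MOr p q => sat u fo so p \/ sat u fo so q
  | MImp p q => sat u fo so p -> sat u fo so q
  | MExFO x p => exists i, i < size u /\ sat u (upd fo x i) so p
  | MAllFO x p => forall i, i < size u -> sat u (upd fo x i) so p
  | MExSO X p => exists P : nat -> bool,
                   (forall i, P i -> i < size u) /\ sat u fo (upd so X P) p
  | MAllSO X p => forall P : nat -> bool,
                   (forall i, P i -> i < size u) -> sat u fo (upd so X P) p
  end.

Fixpoint fo_free (Sigma : Type) (phi : mso Sigma) : seq nat :=
  match phi with
  | MTrue | MFalse => [::]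
  | MLt x y | MEq x y => [:: x; y]
  | MLetter _ x | MMem x _ => [:: x]
  | MNot p => fo_free p
  | MAnd p q | MOr p q | MImp p q => fo_free p ++ fo_free q
  | MExFO x p | MAllFO x p => filter (predC1 x) (fo_free p)
  | MExSO _ p | MAllSO _ p => fo_free p
  end.

Fixpoint so_free (Sigma : Type) (phi : mso Sigma) : seq nat :=
  match phi with
  | MTrue | MFalse | MLt _ _ | MEq _ _ | MLetter _ _ => [::]
  | MMem _ X => [:: X]
  | MNot p => so_free p
  | MAnd p q | MOr p q | MImp p q => so_free p ++ so_free q
  | MExFO _ p | MAllFO _ p => so_free p
  | MExSO X p | MAllSO X p => filter (predC1 X) (so_free p)
  end.

Definition closed (Sigma : Type) (phi : mso Sigma) : Prop :=
  fo_free phi = [::] /\ so_free phi = [::].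

(* u |= phi, for closed phi (the valuation is irrelevant) *)
Definition models (Sigma : Type) (u : seq Sigma) (phi : mso Sigma) : Prop :=
  sat u (fun _ => 0) (fun _ _ => false) phi.

(* A logic (fragment of MSO): for each alphabet, a set of MSO formulas. *)
Definition logic := forall A : finType, mso A -> Prop.

Definition F_language (F : logic) (A : finType) (L : seq A -> Prop) : Prop :=
  exists phi : mso A, F A phi /\ closed phi /\ forall u, L u <-> models u phi.

Definition corresponds (F : logic) (V : finMonoid -> Prop) : Prop :=
  forall (A : finType) (L : seq A -> Prop), F_language F L <-> V_language V L.

Record translation (Sigma : finType) := MkTranslation {
  tr_k : nat;
  tr_S : seq (seq Sigma);
  tr_lt : 'I_tr_k -> Sigma -> seq Sigma -> mso Sigma;
  tr_gt : 'I_tr_k -> Sigma -> seq Sigma -> mso Sigma;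
  tr_init : seq Sigma -> mso Sigma;
  tr_term : seq Sigma -> mso Sigma }.
Arguments tr_lt {Sigma} t _ _ _.
Arguments tr_gt {Sigma} t _ _ _.
Arguments tr_init {Sigma} t _.
Arguments tr_term {Sigma} t _.

Definition unsat2 (Sigma : finType) (p q : mso Sigma) : Prop :=
  ~ exists u, models u p /\ models u q.

Definition F_translation (F : logic) (Sigma : finType)
    (T : translation Sigma) : Prop :=
  [/\ 0 < tr_k T,
      (forall j a v, v \in tr_S T ->
         [/\ F Sigma (tr_lt T j a v), closed (tr_lt T j a v),
             F Sigma (tr_gt T j a v) & closed (tr_gt T j a v)]),
      (forall v, v \in tr_S T ->
         [/\ F Sigma (tr_init T v), closed (tr_init T v),
             F Sigma (tr_term T v) & closed (tr_term T v)]),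
      (forall (a : Sigma) (u w : seq Sigma), exists j v,
         [/\ v \in tr_S T, models u (tr_lt T j a v) & models w (tr_gt T j a v)]) &
      (forall v1 v2, v1 \in tr_S T -> v2 \in tr_S T -> v1 <> v2 ->
         (forall j j' a,
            unsat2 (tr_lt T j a v1) (tr_lt T j' a v2) \/
            unsat2 (tr_gt T j a v1) (tr_gt T j' a v2)) /\
         unsat2 (tr_init T v1) (tr_init T v2) /\
         unsat2 (tr_term T v1) (tr_term T v2))].

Definition tr_rel (Sigma : finType) (T : translation Sigma) (u w : seq Sigma)
  : Prop :=
  exists (w0 : seq Sigma) (ws : seq (seq Sigma)) (wt : seq Sigma),
    [/\ size ws = size u,
        w = w0 ++ flatten ws ++ wt,
        w0 \in tr_S T, wt \in tr_S T & all (mem (tr_S T)) ws] /\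
    (forall i a, i < size u -> onth u i = Some a ->
       exists j, models (take i u) (tr_lt T j a (nth [::] ws i)) /\
                 models (drop i.+1 u) (tr_gt T j a (nth [::] ws i))) /\
    models u (tr_init T w0) /\
    models u (tr_term T wt).

Definition defines (Sigma : finType) (T : translation Sigma)
    (f : seq Sigma -> option (seq Sigma)) : Prop :=
  forall u w, f u = Some w <-> tr_rel T u w.

From Stdlib Require Import ClassicalEpsilon.
From Pilot Require Import Defs.
From mathcomp Require Import all_boot.
Set Implicit Arguments.
Unset Strict Implicit.
Unset Printing Implicit Defensive.

(* A complete bimachine's output at a position is determined by the pair
   (state of L after the prefix, state of R after the suffix), and its
   initial and final outputs by the state of R resp. L after the whole word.
   Every language "the run of a V-automaton ends in a state satisfying Q" is
   a V-language (recognised by the Cayley automaton of the transition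
   monoid), hence F-definable, so all these conditions are closed
   F-formulas. *)

Section Runs.
Variable Sigma : Type.
Implicit Types u v : seq Sigma.

Lemma trans_cat (A : DA Sigma) p u v :
  trans A p (u ++ v) = if trans A p u is Some q then trans A q v else None.
Proof. by elim: u p => [|a u IHu] p //=; case: (da_delta A p a). Qed.

Lemma trans_cat_Some (A : DA Sigma) p u v q :
  trans A p (u ++ v) = Some q -> exists q', trans A p u = Some q'.
Proof. by rewrite trans_cat; case: (trans A p u) => // q' _; exists q'. Qed.

Lemma tcongL_trans (A : DA Sigma) u v p : tcongL A u v -> trans A p u = trans A p v.
Proof.
move=> uv; case Eu: (trans A p u) => [q|]; first by apply/esym/uv.
by case Ev: (trans A p v) => [q|] //; rewrite -Eu; apply/uv.
Qed.

Definition cayley_DA (M : finMonoid) (h : seq Sigma -> M) : DA Sigma :=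
  MkDA (fm_one M) (fun m a => Some (fm_op m (h [:: a]))).

Section Cayley.
Variables (M : finMonoid) (h : seq Sigma -> M).
Hypothesis h_nil : h [::] = fm_one M.
Hypothesis h_cat : forall u v, h (u ++ v) = fm_op (h u) (h v).

Lemma trans_cayley m u : trans (cayley_DA h) m u = Some (fm_op m (h u)).
Proof.
elim: u m => [|a u IHu] m /=; first by rewrite h_nil fm_right_id.
by rewrite IHu -fm_assoc -h_cat.
Qed.

Lemma tcongL_cayley u v : tcongL (cayley_DA h) u v <-> h u = h v.
Proof.
split=> uv; last by move=> p q; rewrite !trans_cayley uv.
have := (uv (fm_one M) (fm_op (fm_one M) (h u))).1.
by rewrite !trans_cayley // !fm_left_id => /(_ erefl) [].
Qed.

End Cayley.

Lemma V_language_saturated (V : finMonoid -> Prop) c (L : seq Sigma -> Prop) :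
  quotient_in_V V c -> (forall u v, c u v -> L u -> L v) -> V_language V L.
Proof.
case=> M [h [VM h_nil h_cat h_onto h_ker]] L_sat.
pose final m := if excluded_middle_informative (exists u, h u = m /\ L u)
                then true else false.
exists (cayley_DA h), final; split.
  by exists M, h; split=> // u v; rewrite tcongL_cayley.
move=> u; rewrite trans_cayley // fm_left_id; split=> [Lu | [_ [[<-]]]].
  exists (h u); split=> //; rewrite /final.
  by case: excluded_middle_informative => // -[]; exists u.
rewrite /final; case: excluded_middle_informative => // -[v [hv Lv]] _.
by apply: L_sat Lv; apply/h_ker.
Qed.

Lemma V_language_stateL V (A : DA Sigma) (Q : option A -> Prop) :
  V_automatonL V A -> V_language V (fun u => Q (trans A (da_init A) u)).
Proof. by move/V_language_saturated; apply=> u v /tcongL_trans ->. Qed.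

(* [tcongR A u v] is [tcongL A (rev u) (rev v)] by definition. *)
Lemma V_language_stateR V (A : DA Sigma) (Q : option A -> Prop) :
  V_automatonR V A -> V_language V (fun u => Q (trans A (da_init A) (rev u))).
Proof. by move/V_language_saturated; apply=> u v /tcongL_trans ->. Qed.

End Runs.

Section Splits.
Variable Sigma : eqType.

Lemma size_splits (p s : seq Sigma) : size (splits p s) = size s.
Proof. by elim: s p => [|a s IHs] p //=; rewrite IHs. Qed.

Lemma nth_splits d a0 (p s : seq Sigma) i : i < size s ->
  nth d (splits p s) i = (p ++ take i s, nth a0 s i, drop i.+1 s).
Proof.
elim: s p i => [|a s IHs] p [|i] //= lt_i_s; first by rewrite cats0 drop0.
by rewrite IHs // cat_rcons.
Qed.

Lemma mem_splits x (p s : seq Sigma) : x \in splits p s ->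
  exists p' a s', x = (p ++ p', a, s') /\ s = p' ++ a :: s'.
Proof.
elim: s p => [|a s IHs] p //=; rewrite in_cons => /orP[/eqP-> | /IHs].
  by exists [::], a, s; rewrite cats0.
by case=> p' [b [s' [-> ->]]]; exists (a :: p'), b, s'; rewrite cat_rcons.
Qed.

Lemma ocat_map_Some (X : eqType) (s : seq X) f (g : X -> seq Sigma) :
  {in s, forall x, f x = Some (g x)} -> ocat (map f s) = Some (flatten (map g s)).
Proof.
elim: s => [|x s IHs] //= fg.
by rewrite fg ?mem_head // IHs // => y sy; rewrite fg // in_cons sy orbT.
Qed.

End Splits.

Definition F_formula_for (F : logic) (A : finType) (L : seq A -> Prop) (phi : mso A) :=
  [/\ F A phi, Defs.closed phi & forall u, L u <-> models u phi].

Definition defining_formula (F : logic) (A : finType) (L : seq A -> Prop) : mso A :=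
  epsilon (inhabits MFalse) (F_formula_for F L).

Lemma defining_formulaP (F : logic) (A : finType) (L : seq A -> Prop) :
  F_language F L -> F_formula_for F L (defining_formula F L).
Proof. by case=> phi [Fphi [cphi Lphi]]; apply: epsilon_spec; exists phi. Qed.

Section BimachineTranslation.
Variables (V : finMonoid -> Prop) (F : logic) (Sigma : finType) (B : bimachine Sigma).
Hypothesis F_V : corresponds F V.
Hypothesis B_complete : complete_bm B.
Hypothesis B_V : V_bimachine V B.

Local Notation LA := (bmL B).
Local Notation RA := (bmR B).
Local Notation runL u := (trans LA (da_init LA) u).
Local Notation runR u := (trans RA (da_init RA) (rev u)).

Definition stateL_formula (Q : option LA -> Prop) : mso Sigma :=
  defining_formula F (fun u => Q (runL u)).

Definition stateR_formula (Q : option RA -> Prop) : mso Sigma :=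
  defining_formula F (fun u => Q (runR u)).

Lemma stateL_formulaP Q : F_formula_for F (fun u => Q (runL u)) (stateL_formula Q).
Proof. by apply/defining_formulaP/F_V/V_language_stateL; case: B_V. Qed.

Lemma stateR_formulaP Q : F_formula_for F (fun u => Q (runR u)) (stateR_formula Q).
Proof. by apply/defining_formulaP/F_V/V_language_stateR; case: B_V. Qed.

Lemma stateL_formula_F Q : @F Sigma (stateL_formula Q).
Proof. by case: (stateL_formulaP Q). Qed.

Lemma stateL_formula_closed Q : Defs.closed (stateL_formula Q).
Proof. by case: (stateL_formulaP Q). Qed.

Lemma stateR_formula_F Q : @F Sigma (stateR_formula Q).
Proof. by case: (stateR_formulaP Q). Qed.

Lemma stateR_formula_closed Q : Defs.closed (stateR_formula Q).
Proof. by case: (stateR_formulaP Q). Qed.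

Lemma models_stateL_formula Q u : models u (stateL_formula Q) <-> Q (runL u).
Proof. by have [_ _ ->] := stateL_formulaP Q. Qed.

Lemma models_stateR_formula Q u : models u (stateR_formula Q) <-> Q (runR u).
Proof. by have [_ _ ->] := stateR_formulaP Q. Qed.

(* Junk value [::] when a run or [bm_omega] is undefined; this never happens
   on the domain of [bm_sem]. *)
Definition out (ol : option LA) (a : Sigma) (or : option RA) : seq Sigma :=
  if (ol, or) is (Some l, Some r) then odflt [::] (bm_omega B l a r) else [::].

Definition letter_out (x : seq Sigma * Sigma * seq Sigma) : seq Sigma :=
  let: (p, a, s) := x in out (runL p) a (runR s).

Definition state_pair := (option LA * option RA)%type.

Definition pair_of (j : 'I_#|{: state_pair}|) : state_pair := enum_val j.

Definition outputs : seq (seq Sigma) :=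
  [seq out x.1.1 x.1.2 x.2 | x <- enum {: option LA * Sigma * option RA}] ++
  [seq odflt [::] (bm_lambda B r) | r <- enum RA] ++
  [seq odflt [::] (bm_rho B l) | l <- enum LA].

(* The index j guesses the pair (run of L on the prefix, run of R on the
   suffix): [tr_lt] checks the first component and fixes the output of the
   position, [tr_gt] checks the second. *)
Definition bm_translation : translation Sigma :=
  {| tr_k := #|{: state_pair}|;
     tr_S := outputs;
     tr_lt j a v := stateL_formula
       (fun ol => ol = (pair_of j).1 /\ out (pair_of j).1 a (pair_of j).2 = v);
     tr_gt j a v := stateR_formula (fun or => or = (pair_of j).2);
     tr_init v := stateR_formula (fun or => exists2 r, or = Some r & bm_lambda B r = Some v);
     tr_term v := stateL_formula (fun ol => exists2 l, ol = Some l & bm_rho B l = Some v) |}.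

Lemma out_in_outputs ol a or : out ol a or \in outputs.
Proof. by rewrite !mem_cat; apply/or3P/Or31/mapP; exists (ol, a, or); rewrite ?mem_enum. Qed.

Lemma lambda_in_outputs r x : bm_lambda B r = Some x -> x \in outputs.
Proof.
by move=> rx; rewrite !mem_cat; apply/or3P/Or32/mapP; exists r; rewrite ?mem_enum ?rx.
Qed.

Lemma rho_in_outputs l z : bm_rho B l = Some z -> z \in outputs.
Proof.
by move=> lz; rewrite !mem_cat; apply/or3P/Or33/mapP; exists l; rewrite ?mem_enum ?lz.
Qed.

Lemma models_run_pair p s a :
  let j := enum_rank (runL p, runR s) in
  models p (tr_lt bm_translation j a (out (runL p) a (runR s))) /\
  models s (tr_gt bm_translation j a (out (runL p) a (runR s))).
Proof. by split; [apply/models_stateL_formula | apply/models_stateR_formula];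
  rewrite /pair_of enum_rankK. Qed.

Lemma bm_translation_F : F_translation F bm_translation.
Proof.
split=> /=.
- by apply/card_gt0P; exists (None, None).
- by move=> j a v _; split; auto using stateL_formula_F, stateL_formula_closed,
    stateR_formula_F, stateR_formula_closed.
- by move=> v _; split; auto using stateL_formula_F, stateL_formula_closed,
    stateR_formula_F, stateR_formula_closed.
- move=> a p s; exists (enum_rank (runL p, runR s)), (out (runL p) a (runR s)).
  by have [? ?] := models_run_pair p s a; split=> //; apply: out_in_outputs.
- move=> v1 v2 _ _ v1v2; split; [|split].
  + move=> j j' a; case: (classic (unsat2 (tr_lt bm_translation j a v1)
                                         (tr_lt bm_translation j' a v2))); first by left.
    move=> lt_sat; right=> -[s [/models_stateR_formula s_j /models_stateR_formula s_j']].
    apply: lt_sat => -[p [/models_stateL_formula [p_j v1E] /models_stateL_formula [p_j' v2E]]].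
    by apply: v1v2; rewrite -v1E -v2E -p_j -p_j' -s_j -s_j'.
  + case=> u [/models_stateR_formula [r ur rv1] /models_stateR_formula [r' ur' r'v2]].
    by apply: v1v2; move: ur' r'v2; rewrite ur => -[<-]; rewrite rv1 => -[].
  + case=> u [/models_stateL_formula [l ul lv1] /models_stateL_formula [l' ul' l'v2]].
    by apply: v1v2; move: ul' l'v2; rewrite ul => -[<-]; rewrite lv1 => -[].
Qed.

Lemma bm_letter_complete u l r : runL u = Some l -> runR u = Some r ->
  {in splits [::] u, forall x, bm_letter B x = Some (letter_out x)}.
Proof.
move=> ul ur x /mem_splits [p [a [s [-> u_eq]]]] /=.
rewrite u_eq in ul ur; rewrite rev_cat rev_cons -cats1 -catA in ur.
have [l' ->] := trans_cat_Some ul; have [r' ->] := trans_cat_Some ur.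
by rewrite /out /=; case E: (bm_omega B l' a r') => //; case: (B_complete E).
Qed.

Lemma bm_sem_Some u w : bm_sem B u = Some w <->
  exists r l x z, [/\ runR u = Some r, runL u = Some l, bm_lambda B r = Some x,
    bm_rho B l = Some z & w = x ++ flatten (map letter_out (splits [::] u)) ++ z].
Proof.
rewrite /bm_sem; split=> [|[r [l [x [z [ur ul rx lz ->]]]]]]; last first.
  by rewrite ur ul rx lz (ocat_map_Some (bm_letter_complete ul ur)).
case ur: (runR u) => [r|] //; case ul: (runL u) => [l|] //.
rewrite (ocat_map_Some (bm_letter_complete ul ur)).
case rx: (bm_lambda B r) => [x|] //; case lz: (bm_rho B l) => [z|] // [<-].
by exists r, l, x, z.
Qed.

Lemma nth_letter_out u i a : onth u i = Some a ->
  nth [::] (map letter_out (splits [::] u)) i =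
  out (runL (take i u)) a (runR (drop i.+1 u)).
Proof.
move=> ui_a; have lt_i_u : i < size u by rewrite -onthTE ui_a.
rewrite (nth_map ([::], a, [::])) ?size_splits // (nth_splits _ a) //.
by rewrite (onth_nth a a u i ui_a).
Qed.

Lemma letter_outputsP u ws : size ws = size u ->
  (forall i a, i < size u -> onth u i = Some a -> exists j,
     models (take i u) (tr_lt bm_translation j a (nth [::] ws i)) /\
     models (drop i.+1 u) (tr_gt bm_translation j a (nth [::] ws i))) <->
  ws = map letter_out (splits [::] u).
Proof.
move=> size_ws; split=> [ws_spec | -> i a _ /nth_letter_out ->]; last first.
  by exists (enum_rank (runL (take i u), runR (drop i.+1 u))); apply: models_run_pair.
apply: (@eq_from_nth _ [::]); first by rewrite size_map size_splits.
rewrite size_ws => i lt_i_u.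
have [a ui_a] : exists a, onth u i = Some a.
  by move: (onthTE u i); rewrite lt_i_u; case: onth => // a _; exists a.
have [j [/models_stateL_formula [p_j <-] /models_stateR_formula s_j]] :=
  ws_spec i a lt_i_u ui_a.
by rewrite (nth_letter_out ui_a) p_j s_j.
Qed.

Lemma bm_translation_sem u w : bm_sem B u = Some w <-> tr_rel bm_translation u w.
Proof.
rewrite bm_sem_Some; split.
  case=> r [l [x [z [ur ul rx lz ->]]]].
  have size_ws : size (map letter_out (splits [::] u)) = size u.
    by rewrite size_map size_splits.
  exists x, (map letter_out (splits [::] u)), z; split; [split|split; [|split]] => //.
  - exact: lambda_in_outputs rx.
  - exact: rho_in_outputs lz.
  - by apply/allP => _ /mapP [[[p a] s] _ ->]; apply: out_in_outputs.
  - exact/(letter_outputsP size_ws).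
  - by apply/models_stateR_formula; exists r.
  - by apply/models_stateL_formula; exists l.
case=> x [ws [z [[size_ws -> _ _ _] [ws_spec [init_x term_z]]]]].
have [r ur rx] := (models_stateR_formula _ _).1 init_x.
have [l ul lz] := (models_stateL_formula _ _).1 term_z.
by exists r, l, x, z; rewrite -(letter_outputsP size_ws).1.
Qed.

End BimachineTranslation.

Theorem mainTheorem3 (V : finMonoid -> Prop) (F : logic) (Sigma : finType)
    (f : seq Sigma -> option (seq Sigma)) :
  monoid_variety V ->
  corresponds F V ->
  (exists B : bimachine Sigma,
     [/\ complete_bm B, V_bimachine V B & forall u, f u = bm_sem B u]) ->
  exists T : translation Sigma, F_translation F T /\ defines T f.
Proof.
move=> _ F_V [B [B_complete B_V f_B]].
exists (bm_translation F B); split; first exact: bm_translation_F.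
by move=> u w; rewrite f_B; apply: bm_translation_sem.
Qed.
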